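(* Let $\vec{\mathcal G}=([n],E)$ be a directed graph with $m=|E|$ edges in which every vertex has at least one outgoing edge and which has a single strongly connected component. Let the weights $(r_{ij})$ be independent absolutely continuous random variables with densities $f_{ij}$ satisfying $f_{ij}(y)\le\phi$ for all $(i,j),y$. For $(i,j)\in E$ define $$Y_{ij}(r)=\inf\{x\in\mathbb R:\ \text{some cycle of minimum mean weight in } \vec{\mathcal G} \text{ with weights } (x,r_{-ij}) \text{ does not contain } (i,j)\}$$ (with values in $[-\infty,+\infty]$). Then for every $\alpha>0$, $$\mathbb P\bigl(\exists (i,j)\in E:\ Y_{ij}\le r_{ij}\le Y_{ij}+\alpha\bigr)\le\alpha m\phi .$$
   Context: The mean weight of a directed cycle is the sum of its edge weights divided by its number of edges. $(x,r_{-ij})$ denotes $r$ with coordinate $ij$ replaced by $x$. *)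

From HB Require Import structures.
From mathcomp Require Import all_boot all_order all_algebra.
From mathcomp Require Import all_classical all_reals all_analysis.
Set Implicit Arguments. Unset Strict Implicit. Unset Printing Implicit Defensive.
Import Order.TTheory GRing.Theory Num.Theory.
Local Open Scope ring_scope.

Section MeanCycles.
Variable n : nat.
Notation V := 'I_n.
Notation edge := (V * V)%type.

Definition is_cycle (E : {set edge}) (c : seq V) : bool :=
  [&& c != [::], uniq c & cycle (fun u v => (u, v) \in E) c].

Definition cycle_edges (c : seq V) : seq edge := zip c (rot 1 c).

Variable R : realType.

Definition mean_weight (r : edge -> R) (c : seq V) : R :=
  (\sum_(e <- cycle_edges c) r e) / (size c)%:R.

Definition is_min_mean_cycle (E : {set edge}) (r : edge -> R) (c : seq V) : Prop :=
  is_cycle E c /\ forall c', is_cycle E c' -> mean_weight r c <= mean_weight r c'.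

Definition upd (r : edge -> R) (e : edge) (x : R) : edge -> R :=
  fun e' => if e' == e then x else r e'.

Definition Yval (E : {set edge}) (e : edge) (r : edge -> R) : \bar R :=
  ereal_inf [set x%:E | x in
    [set x : R | exists c, is_min_mean_cycle E (upd r e x) c /\ e \notin cycle_edges c]].

End MeanCycles.

From HB Require Import structures.
From mathcomp Require Import all_boot all_order all_algebra.
From mathcomp Require Import all_classical all_reals all_analysis.
From mathcomp Require Import ring.
Import Order.TTheory GRing.Theory Num.Theory.
Local Open Scope classical_set_scope.
Local Open Scope ring_scope.

(* For a fixed edge e, the set of x such that some minimum mean cycle for the
   weights (x, r_{-e}) avoids e is an up-set, and Y_e is its infimum; in
   particular Y_e is a function of r_{-e} only, hence independent of r_e.
   Cut the real line into cells of length delta: on the event that Y_e lies in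
   the z-th cell (an event of the sigma-algebra of r_{-e}), the event
   Y_e <= r_e <= Y_e + alpha forces r_e into an interval of length
   delta + alpha, of probability at most phi (delta + alpha).  The cells being
   disjoint, the event has probability at most phi (delta + alpha) for every
   delta > 0, hence at most alpha phi; a union bound over the edges ends the
   proof. *)

Set Implicit Arguments. Unset Strict Implicit.

Section AvoidingWeights.
Variables (R : realType) (n : nat) (E : {set 'I_n * 'I_n}) (e : 'I_n * 'I_n).
Implicit Types (r : 'I_n * 'I_n -> R) (x y z a : R).

Definition avoiding_weights r : set R :=
  [set x | exists c, is_min_mean_cycle E (upd r e x) c /\ e \notin cycle_edges c].

Lemma mean_weight_upd_le r x y c : x <= y ->
  mean_weight (upd r e x) c <= mean_weight (upd r e y) c.
Proof.
move=> xy; rewrite /mean_weight ler_wpM2r ?invr_ge0 ?ler0n //.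
by apply: ler_sum => i _; rewrite /upd; case: ifP.
Qed.

Lemma mean_weight_upd_notin r x y c : e \notin cycle_edges c ->
  mean_weight (upd r e x) c = mean_weight (upd r e y) c.
Proof.
move=> ec; rewrite /mean_weight; congr (_ / _).
apply: eq_big_seq => i ic; rewrite /upd; case: eqP => // ie.
by move: ec; rewrite -ie ic.
Qed.

(* Raising r_e keeps the mean of the avoiding cycle and lowers no other mean. *)
Lemma avoiding_weights_le r x y :
  avoiding_weights r x -> x <= y -> avoiding_weights r y.
Proof.
move=> [c [[cc cmin] ec]] xy; exists c; split => //; split => // c' cc'.
rewrite (mean_weight_upd_notin r y x ec).
exact: le_trans (cmin c' cc') (mean_weight_upd_le r c' xy).
Qed.

Lemma Yval_le r z :
  (Yval E e r <= z%:E)%E <-> (forall x, z < x -> avoiding_weights r x).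
Proof.
split=> [Yz x zx|Sz].
  have /ereal_inf_lt[_ [w Sw <-]] : (Yval E e r < x%:E)%E.
    by apply: le_lt_trans Yz _; rewrite lte_fin.
  by rewrite lte_fin => /ltW; exact: avoiding_weights_le.
apply/lee_addgt0Pr => eps eps0; rewrite -EFinD; apply: ereal_inf_lbound.
by exists (z + eps) => //; apply: Sz; rewrite ltrDl.
Qed.

Lemma le_Yval r z :
  (z%:E <= Yval E e r)%E <-> (forall x, x < z -> ~ avoiding_weights r x).
Proof.
split=> [zY x xz Sx|Sz].
  have Yx : (Yval E e r <= x%:E)%E by apply: ereal_inf_lbound; exists x.
  by have := le_trans zY Yx; rewrite lee_fin leNgt xz.
apply: le_ereal_inf_tmp => _ [w Sw <-]; rewrite lee_fin leNgt.
by apply/negP => wz; exact: Sz wz Sw.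
Qed.

Lemma Yval_le_rat r a : (Yval E e r <= a%:E)%E <->
  (forall q : rat, a < ratr q -> avoiding_weights r (ratr q)).
Proof.
rewrite Yval_le; split=> [Sa q|Sa x ax]; first exact: Sa.
have [q] := rat_in_itvoo ax; rewrite in_itv /= => /andP[aq qx].
exact: avoiding_weights_le (Sa _ aq) (ltW qx).
Qed.

Lemma le_Yval_rat r a : (a%:E <= Yval E e r)%E <->
  (forall q : rat, ratr q < a -> ~ avoiding_weights r (ratr q)).
Proof.
rewrite le_Yval; split=> [Sa q|Sa x xa Sx]; first exact: Sa.
have [q] := rat_in_itvoo xa; rewrite in_itv /= => /andP[xq qa].
exact: Sa q qa (avoiding_weights_le Sx (ltW xq)).
Qed.

End AvoidingWeights.

Lemma path_zip_belast (T : eqType) (rl : rel T) x p :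
  path rl x p -> forall uv, uv \in zip (belast x p) p -> rl uv.1 uv.2.
Proof.
elim: p x => [//|y p IH] x /= /andP[rxy pp] uv.
by rewrite in_cons => /orP[/eqP->//|]; exact: IH.
Qed.

Lemma cycle_edges_sub n (E : {set 'I_n * 'I_n}) c :
  is_cycle E c -> {subset cycle_edges c <= E}.
Proof.
case: c => [//|x s] /and3P[_ _ cyc] uv; rewrite /cycle_edges rot1_cons.
rewrite -[x :: s](belast_rcons x s x) => uvc.
by have := path_zip_belast cyc uvc; case: uv {uvc}.
Qed.

Section MeasurableAvoidingWeights.
Variables (R : realType) (n : nat) (E : {set 'I_n * 'I_n}) (e : 'I_n * 'I_n).
Context d (T : measurableType d) (s : T -> 'I_n * 'I_n -> R).
Hypothesis s_meas : forall e', e' \in E -> e' != e ->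
  measurable_fun setT (fun t => s t e').

Lemma measurable_mean_weight_upd x c : is_cycle E c ->
  measurable_fun setT (fun t => mean_weight (upd (s t) e x) c).
Proof.
move=> cc; apply: measurable_realfun.measurable_funM => //.
rewrite (_ : (fun t => _) = fun t => \sum_(uv <- cycle_edges c)
    (if uv \in E then upd (s t) e x uv else 0)).
  apply: measurable_sum => uv; have [uvE|_] /= := boolP (uv \in E); last first.
    exact: measurable_cst.
  rewrite /upd; have [_|uve] := eqVneq uv e; first exact: measurable_cst.
  exact: s_meas.
by apply/funext => t; apply: eq_big_seq => uv /(cycle_edges_sub cc) ->.
Qed.

Lemma measurable_avoiding_weights x :
  measurable [set t | avoiding_weights E e (s t) x].
Proof.
have -> : [set t | avoiding_weights E e (s t) x] = \bigcup_(c : seq 'I_n)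
   (if is_cycle E c && (e \notin cycle_edges c) then
      ~` \bigcup_(c' : seq 'I_n) (if is_cycle E c' then
         ~` [set t | mean_weight (upd (s t) e x) c <= mean_weight (upd (s t) e x) c']
         else set0)
    else set0).
  apply/seteqP; split => t /=.
    move=> [c [[cc cmin] ec]]; exists c => //; rewrite cc ec /=.
    by move=> [c' _]; case: ifP => // cc' /=; apply; exact: cmin.
  move=> [c _]; case: ifP => // /andP[cc ec] no_smaller; exists c; split => //.
  split => // c' cc'; apply: contrapT => c'_smaller; apply: no_smaller.
  by exists c' => //; rewrite cc'.
apply: countable_bigcupT_measurable; first exact: countableP.
move=> c; case: ifP => // /andP[cc _]; apply: measurableC.
apply: countable_bigcupT_measurable; first exact: countableP.
move=> c'; case: ifP => // cc'; apply: measurableC.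
rewrite -[X in measurable X]setTI.
by apply: measurable_fun_le => //; exact: measurable_mean_weight_upd.
Qed.

End MeasurableAvoidingWeights.

Section IndependentGenerators.
Context d (T : measurableType d) (R : realType) (P : probability T R).

Lemma g_sigma_indep (G : set (set T)) (X : set T) :
  setI_closed G -> measurable X ->
  (forall A, G A -> measurable A /\ P (A `&` X) = (P A * P X)%E) ->
  forall A, <<s G >> A -> measurable A /\ P (A `&` X) = (P A * P X)%E.
Proof.
move=> GI mX GX.
have finE B : measurable B -> P B = (fine (P B))%:E.
  by move=> mB; rewrite fineK // fin_num_measure.
apply: lambda_system_subset => //.
apply/dynkin_lambda_system; split.
- by split => //; rewrite setTI probability_setT mul1e.
- move=> A [mA AX]; split; first exact: measurableC.
  have XDA : P (X `\` A) = (P X - P (X `&` A))%E.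
    by apply: measureD => //; rewrite ltey_eq fin_num_measure.
  rewrite probability_setC // setIC -setDE XDA setIC AX.
  rewrite (finE X mX) (finE A mA).
  by rewrite -EFinM -EFinB -EFinB -EFinM mulrBl mul1r.
- move=> F tF FX; split; first by apply: bigcupT_measurable => k; exact: (FX k).1.
  rewrite setI_bigcupl measure_bigcup //; last 2 first.
  + by move=> k _; apply: measurableI => //; exact: (FX k).1.
  + exact: trivIset_setIr.
  rewrite measure_bigcup //; last by move=> k _; exact: (FX k).1.
  rewrite (finE X mX) muleC -nneseriesZl; last by move=> k _; exact: measure_ge0.
  by apply: eq_eseriesr => k _; apply: eq_trans (FX k).2 _; rewrite -finE // muleC.
Qed.

Lemma probability_series_trivIset_le1 (F : (set T)^nat) :
  (forall k, measurable (F k)) -> trivIset setT F ->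
  (\sum_(0 <= k <oo) P (F k) <= 1)%E.
Proof.
move=> mF tF; have -> : (\sum_(0 <= k <oo) P (F k) = P (\bigcup_k F k))%E.
  by rewrite measure_bigcup //; apply: eq_eseriesl => k; rewrite in_setT.
exact/probability_le1/bigcupT_measurable.
Qed.

End IndependentGenerators.

(* The countable additivity lemmas of the library index families by nat. *)
Definition int_seq T (F : int -> set T) : (set T)^nat :=
  fun k => if @pickle_inv int k is Some z then F z else set0.

Lemma bigcup_int_seq T (F : int -> set T) : \bigcup_k int_seq F k = \bigcup_z F z.
Proof.
apply/seteqP; split=> t [k _]; rewrite /int_seq.
  by case: pickle_inv => // z Fzt; exists z.
by move=> Fkt; exists (pickle k) => //; rewrite pickleK_inv.
Qed.

Lemma trivIset_int_seq T (F : int -> set T) :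
  (forall z z', z < z' -> F z `&` F z' = set0) -> trivIset setT (int_seq F).
Proof.
move=> Fdisj; apply/trivIsetP => i j _ _ ij; rewrite /int_seq.
case pi: (@pickle_inv int i) => [z|]; last by rewrite set0I.
case pj: (@pickle_inv int j) => [z'|]; last by rewrite setI0.
have zz' : z != z'.
  apply: contra ij => /eqP zz.
  have := @pickle_invK int i; rewrite pi /= => <-.
  by have := @pickle_invK int j; rewrite pj /= -zz => <-.
by case: ltgtP zz' => // zz' _; [exact: Fdisj|rewrite setIC; exact: Fdisj].
Qed.

Section CoordinateIndependence.
Variables (R : realType) (n : nat) (E : {set 'I_n * 'I_n}).
Context d (T : measurableType d) (P : probability T R) (r : T -> 'I_n * 'I_n -> R).
Hypothesis r_meas : forall e, e \in E -> measurable_fun setT (fun t => r t e).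
Hypothesis r_indep : forall B : 'I_n * 'I_n -> set R,
  (forall e, e \in E -> measurable (B e)) ->
  P [set t | forall e, e \in E -> B e (r t e)]
  = (\prod_(e in E) fine (P [set t | B e (r t e)]))%:E.
Variable e : 'I_n * 'I_n.
Hypothesis eE : e \in E.

(* A pi-system generating the sigma-algebra of the weights other than r_e. *)
Definition other_rects : set (set T) :=
  [set A | exists2 B : 'I_n * 'I_n -> set R, (forall e', e' \in E -> measurable (B e'))
     & A = [set t | forall e', e' \in E -> e' != e -> B e' (r t e')]].

Lemma measurable_coord e' B : e' \in E -> measurable B ->
  measurable [set t | B (r t e')].
Proof. by move=> e'E mB; rewrite -[X in measurable X]setTI; exact: r_meas. Qed.

Lemma other_rects_measurable A : other_rects A -> measurable A.
Proof.
move=> [B mB ->].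
rewrite (_ : [set t | _] = \bigcap_(e' in [set e' | (e' \in E) && (e' != e)])
  [set t | B e' (r t e')]).
  apply: fin_bigcap_measurable finite_finset _ => e' /andP[e'E _].
  exact: measurable_coord e'E (mB _ e'E).
apply/seteqP; split=> t /= Bt e'; first by move=> /andP[]; exact: Bt.
by move=> e'E e'e; apply: Bt; apply/andP.
Qed.

Lemma other_rects_indep J A : measurable J -> other_rects A ->
  P (A `&` [set t | J (r t e)]) = (P A * P [set t | J (r t e)])%E.
Proof.
move=> mJ [B mB ->].
pose BJ (C : set R) e' := if e' == e then C else B e'.
have mBJ C : measurable C -> forall e', e' \in E -> measurable (BJ C e').
  by move=> mC e' e'E; rewrite /BJ; case: eqP => // _; exact: mB.
have mBJT := mBJ _ measurableT; have mBJJ := mBJ _ mJ.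
have rectE C : [set t | forall e', e' \in E -> e' != e -> B e' (r t e')]
    `&` [set t | C (r t e)] = [set t | forall e', e' \in E -> BJ C e' (r t e')].
  apply/seteqP; split=> t /=.
    by move=> [Bt Ct] e' e'E; rewrite /BJ; case: eqP => [->//|/eqP]; exact: Bt.
  move=> BJt; split; last by have := BJt e eE; rewrite /BJ eqxx.
  by move=> e' e'E e'e; have := BJt e' e'E; rewrite /BJ (negPf e'e).
have rectT : [set t | forall e', e' \in E -> e' != e -> B e' (r t e')]
    = [set t | forall e', e' \in E -> BJ setT e' (r t e')].
  by rewrite -(rectE setT) setIT.
have PJE : P [set t | J (r t e)] = (fine (P [set t | J (r t e)]))%:E.
  by rewrite fineK // fin_num_measure //; exact: measurable_coord.
rewrite rectE rectT !r_indep // PJE -EFinM (bigD1 e eE) [in RHS](bigD1 e eE).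
rewrite /= /BJ !eqxx (_ : [set t | setT (r t e)] = setT) //.
rewrite probability_setT /= mul1r mulrC.
by congr (_ * _)%:E; apply: eq_bigr => e' /andP[_ /negPf->].
Qed.

Lemma setI_closed_other_rects : setI_closed other_rects.
Proof.
move=> _ _ [B1 mB1 ->] [B2 mB2 ->]; exists (fun e' => B1 e' `&` B2 e').
  by move=> e' e'E; apply: measurableI; [exact: mB1|exact: mB2].
apply/seteqP; split => t /=.
  by move=> [B1t B2t] e' e'E e'e; split; [exact: B1t|exact: B2t].
by move=> Bt; split => e' e'E e'e; have [] := Bt e' e'E e'e.
Qed.

Lemma other_sigma_indep J A : measurable J -> <<s other_rects >> A ->
  measurable A /\ P (A `&` [set t | J (r t e)]) = (P A * P [set t | J (r t e)])%E.
Proof.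
move=> mJ; apply: g_sigma_indep; first exact: setI_closed_other_rects.
  exact: measurable_coord.
by move=> B GB; split; [exact: other_rects_measurable|exact: other_rects_indep].
Qed.

Lemma other_coord_measurable e' : e' \in E -> e' != e ->
  measurable_fun (setT : set (g_sigma_algebraType other_rects)) (fun t => r t e').
Proof.
move=> e'E e'e _ B mB; apply: sub_sigma_algebra.
exists (fun x => if x == e' then B else setT); first by move=> x xE; case: ifP.
apply/seteqP; split => t /=.
  by move=> [_ Bt] x xE xe; case: eqP => // ->.
by move=> Bt; split => //; have := Bt e' e'E e'e; rewrite eqxx.
Qed.

End CoordinateIndependence.

Section EdgeWindow.
Variables (R : realType) (n : nat) (E : {set 'I_n * 'I_n}).
Context d (T : measurableType d) (P : probability T R) (r : T -> 'I_n * 'I_n -> R).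
Variables (f : 'I_n * 'I_n -> R -> R) (phi alpha : R).
Hypothesis r_meas : forall e, e \in E -> measurable_fun setT (fun t => r t e).
Hypothesis r_indep : forall B : 'I_n * 'I_n -> set R,
  (forall e, e \in E -> measurable (B e)) ->
  P [set t | forall e, e \in E -> B e (r t e)]
  = (\prod_(e in E) fine (P [set t | B e (r t e)]))%:E.
Hypothesis f_meas : forall e, e \in E -> measurable_fun setT (f e).
Hypothesis f_ge0 : forall e, e \in E -> forall y, 0 <= f e y.
Hypothesis r_density : forall e, e \in E -> forall B : set R, measurable B ->
  P [set t | B (r t e)] = (\int[lebesgue_measure]_(y in B) (f e y)%:E)%E.
Hypothesis f_le : forall e, e \in E -> forall y, f e y <= phi.
Variable e : 'I_n * 'I_n.
Hypothesis eE : e \in E.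

Lemma phi_ge0 : 0 <= phi.
Proof. exact: le_trans (f_ge0 eE 0) (f_le eE 0). Qed.

Lemma prob_coord_itv_le a b : a <= b ->
  (P [set t | [set` `[a, b]] (r t e)] <= (phi * (b - a))%:E)%E.
Proof.
move=> ab; have mI : measurable [set` `[a, b]] by exact: measurable_itv.
rewrite (r_density eE mI).
have le_int := @ge0_le_integral _ _ _ lebesgue_measure _ mI
  (fun y => (f e y)%:E) (fun _ => phi%:E).
apply: le_trans (le_int _ _ _ _) _.
- by move=> y _; rewrite lee_fin f_ge0.
- by apply/measurable_realfun.measurable_EFinP; exact: measurable_funS (f_meas eE).
- exact: measurable_cst.
- by move=> y _; rewrite lee_fin f_le.
rewrite [X in (X <= _)%E](_ : _ = (phi%:E * lebesgue_measure [set` `[a, b]])%E).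
  by rewrite lebesgue_measure_itv /=; case: ifP => _; rewrite ?mule0 -?EFinB -?EFinM
    lee_fin // mulr_ge0 ?phi_ge0 ?subr_ge0.
exact: integral_cst.
Qed.

Definition avoid_event x : set T := [set t | avoiding_weights E e (r t) x].

Lemma avoid_event_other_sigma x :
  @measurable _ (g_sigma_algebraType (other_rects E r e)) (avoid_event x).
Proof.
by apply: measurable_avoiding_weights => e' e'E e'e; exact: other_coord_measurable.
Qed.

Lemma other_sigma_measurable A : <<s other_rects E r e >> A -> measurable A.
Proof. by move=> GA; have [] := other_sigma_indep r_meas r_indep eE measurableT GA. Qed.

Lemma measurable_avoid_event x : measurable (avoid_event x).
Proof. exact: other_sigma_measurable (avoid_event_other_sigma x). Qed.

Definition window : set T :=
  [set t | (Yval E e (r t) <= (r t e)%:E <= Yval E e (r t) + alpha%:E)%E].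

Lemma measurable_forall_rat (Q : rat -> set T) : (forall q, measurable (Q q)) ->
  measurable [set t | forall q, Q q t].
Proof.
move=> mQ; rewrite (_ : [set t | _] = ~` \bigcup_q ~` Q q).
  by apply/measurableC/bigcupT_measurable_rat => q; exact/measurableC.
apply/seteqP; split=> t /= Qt; first by move=> [q _]; apply.
by move=> q; apply: contrapT => nQq; apply: Qt; exists q.
Qed.

Lemma measurable_window : measurable window.
Proof.
have -> : window =
    [set t | forall q : rat, ([set t | ratr q <= r t e] `|` avoid_event (ratr q)) t]
    `&` [set t | forall q : rat,
           ([set t | r t e <= ratr q + alpha] `|` ~` avoid_event (ratr q)) t].
  apply/seteqP; split => t /=.
    move=> /andP[/Yval_le_rat lo]; rewrite -leeBlDr // -EFinB => /le_Yval_rat hi.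
    split=> q.
      by have [|/lo] := leP (ratr q) (r t e); [left|right].
    by rewrite -lerBlDr; have [|/hi] := leP (r t e - alpha) (ratr q); [left|right].
  move=> [lo hi]; apply/andP; split.
    apply/Yval_le_rat => q qgt; case: (lo q) => //.
    by move=> /(lt_le_trans qgt); rewrite ltxx.
  rewrite -leeBlDr // -EFinB; apply/le_Yval_rat => q qlt; case: (hi q) => //.
  by rewrite -lerBlDr => /(lt_le_trans qlt); rewrite ltxx.
apply: measurableI; apply: measurable_forall_rat => q; apply: measurableU.
- rewrite -[X in measurable X]setTI.
  by apply: measurable_fun_le => //; exact: r_meas.
- exact: measurable_avoid_event.
- rewrite -[X in measurable X]setTI.
  by apply: measurable_fun_le => //; exact: r_meas.
- exact/measurableC/measurable_avoid_event.
Qed.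

Hypothesis alpha_gt0 : 0 < alpha.

Section Cells.
Variable delta : R.
Hypothesis delta_gt0 : 0 < delta.

Definition cell (z : int) : set T :=
  avoid_event ((z + 1)%:~R * delta) `\` avoid_event (z%:~R * delta).

Definition cell_window (z : int) : set T :=
  [set t | [set` `[z%:~R * delta, (z + 1)%:~R * delta + alpha]] (r t e)].

Lemma cell_other_sigma z :
  @measurable _ (g_sigma_algebraType (other_rects E r e)) (cell z).
Proof. by apply: measurableD; exact: avoid_event_other_sigma. Qed.

Lemma measurable_cell z : measurable (cell z).
Proof. exact: other_sigma_measurable (cell_other_sigma z). Qed.

Lemma cell_disj z z' : z < z' -> cell z `&` cell z' = set0.
Proof.
move=> zz'; apply/seteqP; split => // t [[Sz _] [_ nSz']]; apply: nSz'.
apply: avoiding_weights_le Sz _.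
by rewrite ler_wpM2r ?(ltW delta_gt0) // ler_int lezD1.
Qed.

Lemma window_sub_cells : window `<=` \bigcup_z (cell z `&` cell_window z).
Proof.
move=> t /andP[lo hi].
case Y: (Yval E e (r t)) lo hi => [y| |] lo hi; last 2 first.
- by move: lo; rewrite leNgt ltry.
- by move: hi; rewrite addNye leNgt ltNyr.
have Sup : forall x, y < x -> avoid_event x t.
  by apply/(Yval_le E e (r t) y); rewrite Y.
have Slow : forall x, x < y -> ~ avoid_event x t.
  by apply/(le_Yval E e (r t) y); rewrite Y.
move: lo hi; rewrite -EFinD !lee_fin => lo hi.
set z := Num.floor (y / delta).
have zy : z%:~R * delta <= y by rewrite -ler_pdivlMr // floor_le.
have yz1 : y < (z + 1)%:~R * delta by rewrite -ltr_pdivrMr // -floor_lt_int ltzD1.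
(* If the infimum y = z delta is attained, t falls into the previous cell. *)
have [Sz|nSz] := pselect (avoid_event (z%:~R * delta) t).
  have yE : y = z%:~R * delta.
    by apply/eqP; rewrite eq_le zy andbT leNgt; apply/negP => /Slow.
  exists (z - 1) => //; split; first split; rewrite ?subrK //.
    by apply: Slow; rewrite yE ltr_pM2r // ltr_int gtrBl.
  rewrite /cell_window /= in_itv /= subrK -yE hi andbT.
  apply: le_trans lo; apply: le_trans zy.
  by rewrite ler_wpM2r ?(ltW delta_gt0) // ler_int gerBl.
exists z => //; split; first by split => //; exact: Sup.
rewrite /cell_window /= in_itv /= (le_trans zy lo) /=.
by apply: le_trans hi _; rewrite lerD2r ltW.
Qed.

(* r_e is independent of the cells, which only depend on r_{-e}. *)
Lemma prob_cell_window_le z :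
  (P (cell z `&` cell_window z) <= (phi * (delta + alpha))%:E * P (cell z))%E.
Proof.
rewrite (other_sigma_indep r_meas r_indep eE (measurable_itv _) (cell_other_sigma z)).2.
have cell_le : z%:~R * delta <= (z + 1)%:~R * delta + alpha.
  apply: (@le_trans _ _ ((z + 1)%:~R * delta)); last by rewrite lerDl ltW.
  by rewrite ler_wpM2r ?(ltW delta_gt0) // ler_int lerDl.
rewrite muleC lee_wpmul2r //; apply: le_trans (prob_coord_itv_le cell_le) _.
by rewrite (_ : _ + alpha - _ = delta + alpha) // intrD; ring.
Qed.

Lemma prob_window_le_delta : (P window <= (phi * (delta + alpha))%:E)%E.
Proof.
have ge0 : (0 <= (phi * (delta + alpha))%:E)%E.
  by rewrite lee_fin mulr_ge0 ?phi_ge0 // addr_ge0 // ltW.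
pose cws := int_seq (fun z => cell z `&` cell_window z).
have cws_meas k : measurable (cws k).
  rewrite /cws /int_seq; case: pickle_inv => // z.
  exact: measurableI (measurable_cell z) (measurable_coord r_meas eE (measurable_itv _)).
have cover : window `<=` \bigcup_k cws k.
  by rewrite bigcup_int_seq; exact: window_sub_cells.
apply: le_trans
  (@measure_sigma_subadditive _ _ _ P _ _ cws_meas measurable_window cover) _.
apply: (@le_trans _ _ (\sum_(0 <= k <oo) (phi * (delta + alpha))%:E
    * P (int_seq cell k))%E).
  apply: lee_nneseries => [k _ _|k _]; first exact: measure_ge0.
  rewrite /cws /int_seq; case: pickle_inv => [z|]; last by rewrite !measure0 mule0.
  exact: prob_cell_window_le.
rewrite nneseriesZl; last by move=> k _; exact: measure_ge0.
rewrite -[leRHS]mule1 lee_wpmul2l //; apply: probability_series_trivIset_le1.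
  by move=> k; rewrite /int_seq; case: pickle_inv => // z; exact: measurable_cell.
exact/trivIset_int_seq/cell_disj.
Qed.

End Cells.

Lemma prob_window_le : (P window <= (alpha * phi)%:E)%E.
Proof.
apply/lee_addgt0Pr => eps eps0.
have phi1 : 0 < phi + 1 by rewrite ltr_wpDl ?phi_ge0.
have delta_gt0 : 0 < eps / (phi + 1) by rewrite divr_gt0.
apply: le_trans (prob_window_le_delta delta_gt0) _.
rewrite -EFinD lee_fin mulrDr addrC mulrC lerD2l.
by rewrite mulrA ler_pdivrMr // mulrDr mulr1 mulrC lerDl ltW.
Qed.

End EdgeWindow.

Unset Implicit Arguments. Set Strict Implicit.

Theorem mainTheorem5 (R : realType) (n : nat) (E : {set 'I_n * 'I_n})
  (d : measure_display) (T : measurableType d) (P : probability T R)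
  (r : T -> ('I_n * 'I_n -> R)) (f : 'I_n * 'I_n -> R -> R) (phi alpha : R) :
  (forall i : 'I_n, exists j : 'I_n, (i, j) \in E) ->
  (forall i j : 'I_n, connect (fun u v => (u, v) \in E) i j) ->
  (forall e, e \in E -> measurable_fun setT (fun t => r t e)) ->
  (forall B : 'I_n * 'I_n -> set R, (forall e, e \in E -> measurable (B e)) ->
     P [set t | forall e, e \in E -> B e (r t e)]
     = (\prod_(e in E) fine (P [set t | B e (r t e)]))%:E) ->
  (forall e, e \in E -> measurable_fun setT (f e)) ->
  (forall e, e \in E -> forall y, 0 <= f e y) ->
  (forall e, e \in E -> forall B : set R, measurable B ->
     P [set t | B (r t e)] = (\int[lebesgue_measure]_(y in B) (f e y)%:E)%E) ->
  (forall e, e \in E -> forall y, f e y <= phi) ->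
  0 < alpha ->
  (P [set t | exists e, e \in E /\
       (Yval E e (r t) <= (r t e)%:E <= Yval E e (r t) + alpha%:E)%E]
   <= (alpha * #|E|%:R * phi)%:E)%E.
Proof.
move=> _ _ r_meas r_indep f_meas f_ge0 r_density f_le alpha_gt0.
rewrite (_ : [set t | _] = \bigcup_(e in [set` enum E]) window E r alpha e); last first.
  apply/seteqP; split=> t /=; first by move=> [e [eE We]]; exists e; rewrite /= ?mem_enum.
  by move=> [e]; rewrite /= mem_enum => eE We; exists e.
have window_meas e : [set` enum E] e -> measurable (window E r alpha e).
  move=> eE; apply: (measurable_window alpha r_meas r_indep).
  by rewrite -mem_enum; exact: eE.
apply: le_trans (content_sub_fsum P finite_finset window_meas
  (fin_bigcup_measurable finite_finset window_meas) (@subset_refl _ _)) _.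
rewrite -fsbig_seq ?enum_uniq // big_enum /=.
apply: (@le_trans _ _ (\sum_(e in E) (alpha * phi)%:E)%E).
  apply: lee_sum => e eE.
  exact: (prob_window_le r_meas r_indep f_meas f_ge0 r_density f_le eE alpha_gt0).
by rewrite sumEFin sumr_const lee_fin mulrAC mulr_natr.
Qed.
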